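(* Let $\mathcal{A}=(Q,\Sigma,Q_I,\delta,\mathbb{C})$ be a parity tree automaton and $q\in Q$ a useful state. Then $da(\mathcal{A})\ge da(\mathcal{A}_q)$.
   Context: A parity tree automaton (PTA) $\mathcal{A}=(Q,\Sigma,Q_I,\delta,\mathbb{C})$ has $Q$ finite, $Q_I\subseteq Q$, $\delta\subseteq Q\times\Sigma\times Q\times Q$, $\mathbb{C}:Q\to\mathbb{N}$; a computation on $t:\{l,r\}^*\to\Sigma$ is $\phi:\{l,r\}^*\to Q$ with $\phi(\epsilon)\in Q_I$, $(\phi(v),t(v),\phi(vl),\phi(vr))\in\delta$ for all $v$, accepting if on every branch the largest color seen infinitely often is even; $ACC(\mathcal{A},t)$ is the set of accepting computations, $L(\mathcal{A})$ the trees having one. $\mathcal{A}_q$ is $\mathcal{A}$ with initial state set replaced by $\{q\}$. A state $q$ is useful if there exist $t\in L(\mathcal{A})$, $\phi\in ACC(\mathcal{A},t)$ and a node $v$ with $\phi(v)=q$. Degree of ambiguity $da(\mathcal{A})$: $k$ if $|ACC(\mathcal{A},t)|\le k$ for all $t$ and either $k=1$ or this fails for $k-1$; ''finite'' if all $ACC(\mathcal{A},t)$ are finite but no uniform bound exists; $\aleph_0$ if all are countable but not all finite; $2^{\aleph_0}$ otherwise; ordered $1<2<\dots<\text{finite}<\aleph_0<2^{\aleph_0}$. *)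

From Stdlib Require Import Classical ClassicalEpsilon.
From mathcomp Require Import all_boot.

Set Implicit Arguments.
Unset Strict Implicit.
Unset Printing Implicit Defensive.

(* Directions: false = l, true = r.  Nodes of the full binary tree: seq bool,
   child v l = rcons v false, child v r = rcons v true. *)
Definition node := seq bool.

Record PTA (Sigma : finType) := mkPTA {
  pta_Q : finType;
  pta_init : {set pta_Q};
  pta_delta : pta_Q -> Sigma -> pta_Q -> pta_Q -> bool;
  pta_col : pta_Q -> nat }.
Arguments pta_Q {Sigma} p.
Arguments pta_init {Sigma} p.
Arguments pta_delta {Sigma} p _ _ _ _.
Arguments pta_col {Sigma} p _.

Section PTADefs.
Variable Sigma : finType.
Variable A : PTA Sigma.
Local Notation Q := (pta_Q A).

Definition tree := node -> Sigma.
Definition comp := node -> Q.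

Definition is_computation (t : tree) (phi : comp) : Prop :=
  phi [::] \in pta_init A /\
  forall v : node,
    pta_delta A (phi v) (t v) (phi (rcons v false)) (phi (rcons v true)).

Definition branch_node (pi : nat -> bool) (n : nat) : node := mkseq pi n.

Definition accepting (phi : comp) : Prop :=
  forall pi : nat -> bool, exists c : nat,
    ~~ odd c /\
    (forall N, exists n, N <= n /\ pta_col A (phi (branch_node pi n)) = c) /\
    (exists N, forall n, N <= n -> pta_col A (phi (branch_node pi n)) <= c).

Definition ACC (t : tree) (phi : comp) : Prop :=
  is_computation t phi /\ accepting phi.

Definition in_language (t : tree) : Prop := exists phi, ACC t phi.

Definition useful (q : Q) : Prop :=
  exists t phi v, ACC t phi /\ phi v = q.

Definition card_le (P : comp -> Prop) (k : nat) : Prop :=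
  exists s : seq comp, size s <= k /\ forall phi, P phi -> List.In phi s.
Definition finite_set (P : comp -> Prop) : Prop :=
  exists s : seq comp, forall phi, P phi -> List.In phi s.
Definition countable_set (P : comp -> Prop) : Prop :=
  exists f : nat -> comp, forall phi, P phi -> exists n, f n = phi.

End PTADefs.
Arguments tree Sigma : clear implicits.
Arguments comp {Sigma} A.
Arguments is_computation {Sigma} A t phi.
Arguments accepting {Sigma} A phi.
Arguments ACC {Sigma} A t phi.
Arguments in_language {Sigma} A t.
Arguments useful {Sigma} A q.
Arguments card_le {Sigma} A P k.
Arguments finite_set {Sigma} A P.
Arguments countable_set {Sigma} A P.

Definition PTA_at (Sigma : finType) (A : PTA Sigma) (q : pta_Q A) : PTA Sigma :=
  @mkPTA Sigma (pta_Q A) [set q] (pta_delta A) (pta_col A).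

Inductive da_val := DA_k of nat | DA_finite | DA_aleph0 | DA_cont.

Definition da_rank (d : da_val) : nat * nat :=
  match d with
  | DA_k k => (0, k) | DA_finite => (1, 0) | DA_aleph0 => (2, 0) | DA_cont => (3, 0)
  end.

Definition da_le (d1 d2 : da_val) : Prop :=
  let (a1, b1) := da_rank d1 in let (a2, b2) := da_rank d2 in
  a1 < a2 \/ (a1 = a2 /\ b1 <= b2).

Definition uniformly_bounded (Sigma : finType) (A : PTA Sigma) (k : nat) : Prop :=
  forall t, card_le A (ACC A t) k.

Definition is_da_k (Sigma : finType) (A : PTA Sigma) (k : nat) : Prop :=
  1 <= k /\ uniformly_bounded A k /\ (k = 1 \/ ~ uniformly_bounded A k.-1).

Definition da (Sigma : finType) (A : PTA Sigma) : da_val :=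
  if excluded_middle_informative (exists k, is_da_k A k)
  then DA_k (epsilon (inhabits 0) (is_da_k A))
  else if excluded_middle_informative (forall t, finite_set A (ACC A t)) then DA_finite
  else if excluded_middle_informative (forall t, countable_set A (ACC A t))
       then DA_aleph0 else DA_cont.

From Pilot Require Import Defs.
From mathcomp Require Import all_boot.
From Stdlib Require Import Classical ClassicalEpsilon FunctionalExtensionality.

Set Implicit Arguments.
Unset Strict Implicit.
Unset Printing Implicit Defensive.

(* Let phi be an accepting run of A on t with phi(v) = q.  Grafting an
   accepting run psi of A_q on t' at v into phi gives an accepting run of A on
   t with t' grafted at v: the grafted run is locally consistent because
   psi(root) = q = phi(v), and every branch either avoids v, and then follows
   phi, or passes through v, and then eventually follows a branch of psi.
   Restricting to the subtree below v recovers psi, so ACC(A_q, t') injects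
   into the accepting runs of A on a single tree, and every bound on the
   latter (uniform, finite, countable) transfers to A_q. *)

Lemma prefix_rconsE (T : eqType) (s w : seq T) x :
  prefix s (rcons w x) = prefix s w || (s == rcons w x).
Proof.
case: (boolP (prefix s w)) => [sw|nsw] /=.
  exact: prefix_trans sw (prefix_rcons w x).
apply/idP/eqP => [/prefixP[u]|->]; last exact: prefix_refl.
case/lastP: u => [|u y]; first by rewrite cats0.
rewrite -rcons_cat => /rcons_inj[E ->].
by move: nsw; rewrite E prefix_prefix.
Qed.

Lemma mkseq_addn (T : Type) (f : nat -> T) m n :
  mkseq f (m + n) = mkseq f m ++ mkseq (fun i => f (m + i)) n.
Proof.
rewrite /mkseq iotaD map_cat add0n; congr (_ ++ _).
by rewrite -[m in iota m _]addn0 iotaDl -map_comp.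
Qed.

Lemma prefix_mkseq (T : eqType) (f : nat -> T) (s : seq T) n :
  prefix s (mkseq f n) -> mkseq f (size s) = s.
Proof.
move=> sf; have := size_prefix sf; rewrite size_mkseq => le_s_n.
move: sf; rewrite -(subnKC le_s_n) mkseq_addn prefixE.
by rewrite take_size_cat ?size_mkseq // => /eqP.
Qed.

Definition graft (X : Type) (f g : node -> X) (v : node) : node -> X :=
  fun w => if prefix v w then g (drop (size v) w) else f w.

Lemma graft_cat (X : Type) (f g : node -> X) v w : graft f g v (v ++ w) = g w.
Proof. by rewrite /graft prefix_prefix drop_size_cat. Qed.

Lemma graft_out (X : Type) (f g : node -> X) v w :
  ~~ prefix v w -> graft f g v w = f w.
Proof. by rewrite /graft => /negbTE ->. Qed.

Definition parity_ok (col : nat -> nat) : Prop :=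
  exists c : nat,
    ~~ odd c /\
    (forall N, exists n, N <= n /\ col n = c) /\
    (exists N, forall n, N <= n -> col n <= c).

Lemma parity_ok_shift m (col col' : nat -> nat) :
  (forall k, col (m + k) = col' k) -> parity_ok col' -> parity_ok col.
Proof.
move=> E [c [even_c [inf_c [N sup_c]]]]; exists c; split=> //; split.
  move=> M; have [n [le_Mn cn]] := inf_c M.
  exists (m + n); split; [exact: leq_trans le_Mn (leq_addl m n) | by rewrite E].
exists (m + N) => n le_n; have le_m_n := leq_trans (leq_addr N m) le_n.
by rewrite -(subnKC le_m_n) E; apply: sup_c; rewrite leq_subRL.
Qed.

Section Graft.
Variables (Sigma : finType) (A : PTA Sigma).
Variables (t t' : tree Sigma) (phi psi : Defs.comp A) (v : node).

Lemma graft_computation :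
  is_computation A t phi -> is_computation (PTA_at (phi v)) t' psi ->
  is_computation A (graft t t' v) (graft phi psi v).
Proof.
move=> [phi0 phi_delta] [psi0 psi_delta].
have psi_root : psi [::] = phi v by move: psi0; rewrite inE => /eqP.
split.
  rewrite /graft prefixs0; case: eqP => [v0|//].
  by rewrite psi_root v0.
move=> w; case vw: (prefix v w).
  by case/prefixP: vw => u ->; rewrite !rcons_cat !graft_cat; exact: psi_delta.
have graft_child b : graft phi psi v (rcons w b) = phi (rcons w b).
  rewrite /graft prefix_rconsE vw /=; case: eqP => [v_child|//].
  by rewrite v_child drop_size -v_child psi_root.
by rewrite !graft_child !graft_out ?vw //; exact: phi_delta.
Qed.

Lemma graft_accepting :
  accepting A phi -> accepting A psi -> accepting A (graft phi psi v).
Proof.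
move=> acc_phi acc_psi pi.
case: (boolP (prefix v (branch_node pi (size v)))) => [through_v|avoids_v].
  apply: (@parity_ok_shift (size v) _ _ _ (acc_psi (fun i => pi (size v + i)))).
  move=> k; rewrite /branch_node mkseq_addn.
  by rewrite (prefix_mkseq through_v) graft_cat.
apply: (@parity_ok_shift 0 _ _ _ (acc_phi pi)) => n.
rewrite add0n graft_out //; apply: contra avoids_v => /prefix_mkseq vn.
by rewrite /branch_node vn prefix_refl.
Qed.

End Graft.

Definition acc_embeds (Sigma : finType) (B A : PTA Sigma) : Prop :=
  forall t' : tree Sigma, exists (t : tree Sigma)
    (f : Defs.comp B -> Defs.comp A) (g : Defs.comp A -> Defs.comp B),
    forall psi, ACC B t' psi -> ACC A t (f psi) /\ g (f psi) = psi.

Lemma useful_acc_embeds (Sigma : finType) (A : PTA Sigma) (q : pta_Q A) :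
  useful A q -> acc_embeds (PTA_at q) A.
Proof.
move=> [t [phi [v [[comp_phi acc_phi] <-]]]] t'.
exists (graft t t' v), (fun psi => graft phi psi v), (fun g w => g (v ++ w)).
move=> psi [comp_psi acc_psi]; split.
  split; [exact: graft_computation | exact: graft_accepting].
by apply: functional_extensionality => w; rewrite graft_cat.
Qed.

Lemma In_map (X Y : Type) (f : X -> Y) x (s : seq X) :
  List.In x s -> List.In (f x) (map f s).
Proof. by elim: s => //= y s IH [->|/IH]; [left | right]. Qed.

Section Retract.
Variables (Sigma : finType) (B A : PTA Sigma).
Variables (P : Defs.comp B -> Prop) (Q : Defs.comp A -> Prop).
Variables (f : Defs.comp B -> Defs.comp A) (g : Defs.comp A -> Defs.comp B).
Hypothesis retract : forall x, P x -> Q (f x) /\ g (f x) = x.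

Lemma card_le_retract k : card_le A Q k -> card_le B P k.
Proof.
move=> [s [size_s Qs]]; exists (map g s); rewrite size_map; split=> // x Px.
by have [/Qs Qfx <-] := retract Px; exact: In_map.
Qed.

Lemma finite_set_retract : finite_set A Q -> finite_set B P.
Proof.
move=> [s Qs]; exists (map g s) => x Px.
by have [/Qs Qfx <-] := retract Px; exact: In_map.
Qed.

Lemma countable_set_retract : countable_set A Q -> countable_set B P.
Proof.
move=> [e Qe]; exists (g \o e) => x Px.
by have [/Qe[n en] <-] := retract Px; exists n; rewrite /= en.
Qed.

End Retract.

Lemma uniformly_bounded_le (Sigma : finType) (B : PTA Sigma) m n :
  m <= n -> uniformly_bounded B m -> uniformly_bounded B n.
Proof.
move=> le_mn ubm t; have [s [size_s Bs]] := ubm t.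
by exists s; rewrite (leq_trans size_s le_mn).
Qed.

Lemma is_da_k_exists (Sigma : finType) (B : PTA Sigma) k :
  1 <= k -> uniformly_bounded B k -> exists j, is_da_k B j.
Proof.
elim: k => // k IH _ ubk.
case: (classic (uniformly_bounded B k)) => [ubk'|nubk']; last first.
  by exists k.+1; split=> //; split=> //; right.
case: k IH ubk ubk' => [|k] IH ubk ubk'; last exact: IH.
by exists 1; split=> //; split=> //; left.
Qed.

Lemma is_da_k_le (Sigma : finType) (B : PTA Sigma) j k :
  is_da_k B j -> 1 <= k -> uniformly_bounded B k -> j <= k.
Proof.
move=> [j1 [_ [->|nubj]]] k1 ubk //; rewrite leqNgt; apply/negP => lt_kj.
apply: nubj; apply: uniformly_bounded_le ubk.
by rewrite -ltnS (ltn_predK lt_kj).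
Qed.

Variant da_spec (Sigma : finType) (B : PTA Sigma) : da_val -> Prop :=
  | DaK k of is_da_k B k : da_spec B (DA_k k)
  | DaFinite of (forall k, 1 <= k -> ~ uniformly_bounded B k)
      & (forall t, finite_set B (ACC B t)) : da_spec B DA_finite
  | DaAleph0 of (forall k, 1 <= k -> ~ uniformly_bounded B k)
      & ~ (forall t, finite_set B (ACC B t))
      & (forall t, countable_set B (ACC B t)) : da_spec B DA_aleph0
  | DaCont of (forall k, 1 <= k -> ~ uniformly_bounded B k)
      & ~ (forall t, finite_set B (ACC B t))
      & ~ (forall t, countable_set B (ACC B t)) : da_spec B DA_cont.

Lemma daP (Sigma : finType) (B : PTA Sigma) : da_spec B (da B).
Proof.
rewrite /da; case: excluded_middle_informative => [exk|nexk].
  by apply: DaK; exact: epsilon_spec.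
have unb k : 1 <= k -> ~ uniformly_bounded B k.
  by move=> k1 ubk; apply: nexk; exact: is_da_k_exists ubk.
case: excluded_middle_informative => [fin|nfin]; first exact: DaFinite.
case: excluded_middle_informative => [cnt|ncnt].
  exact: DaAleph0.
exact: DaCont.
Qed.

Lemma da_le_embeds (Sigma : finType) (B A : PTA Sigma) :
  acc_embeds B A -> da_le (da B) (da A).
Proof.
move=> emb.
have ub_BA k : uniformly_bounded A k -> uniformly_bounded B k.
  move=> ubk t'; have [t [f [g r]]] := emb t'.
  exact: card_le_retract r k (ubk t).
have fin_BA : (forall t, finite_set A (ACC A t)) ->
    forall t, finite_set B (ACC B t).
  move=> fin t'; have [t [f [g r]]] := emb t'.
  exact: finite_set_retract r (fin t).
have cnt_BA : (forall t, countable_set A (ACC A t)) ->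
    forall t, countable_set B (ACC B t).
  move=> cnt t'; have [t [f [g r]]] := emb t'.
  exact: countable_set_retract r (cnt t).
case: (daP A) => [k [k1 [ubk _]]|_ finA|_ _ cntA|_ _ _];
  case: (daP B) => [j Bj|unbB _|unbB nfinB _|unbB nfinB ncntB];
  rewrite /da_le /=; try by [left | right].
by right; split=> //; exact: is_da_k_le Bj k1 (ub_BA k ubk).
1-3: by case: (unbB k k1 (ub_BA k ubk)).
1-2: by case: (nfinB (fin_BA finA)).
by case: (ncntB (cnt_BA cntA)).
Qed.

Theorem lemma3p4 (Sigma : finType) (A : PTA Sigma) (q : pta_Q A) :
  useful A q -> da_le (da (PTA_at q)) (da A).
Proof. by move=> q_useful; apply: da_le_embeds; exact: useful_acc_embeds. Qed.
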